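(* Let $G$ be a finite group and $\mathsf{T}$ a $G$-transfer system. Let $S$ and $R$ be two minimal generating sets for $\mathsf{T}$. Then there exists a bijection $f\colon S\to R$ such that for every $n\in\mathbb{N}$, $f$ sends each element of $S_n\setminus S_{n+1}$ to an element of $R_n\setminus R_{n+1}$.
   Context: For a finite group $G$, an arrow is a pair $(H,K)$ of subgroups with $H\leqslant K$; it is an identity arrow if $H=K$. A $G$-transfer system is a set $\mathsf{T}$ of arrows containing all identity arrows and closed under composition ($(H,K),(K,L)\in\mathsf{T}\Rightarrow(H,L)\in\mathsf{T}$), conjugation ($(H,K)\in\mathsf{T}\Rightarrow(gHg^{-1},gKg^{-1})\in\mathsf{T}$ for all $g\in G$) and restriction ($(H,K)\in\mathsf{T}$, $L\leqslant K\Rightarrow(H\cap L,L)\in\mathsf{T}$). For a set $S$ of non-identity arrows, $\langle S\rangle$ is the smallest transfer system containing $S$. A minimal generating set of $\mathsf{T}$ is a set $S\subseteq\mathsf{T}$ of non-identity arrows with $\langle S\rangle=\mathsf{T}$ and $\langle S\setminus\{s\}\rangle\subsetneq\mathsf{T}$ for all $s\in S$. For a subgroup $H$, let $P(H)$ be the sum of the exponents in the prime factorization of $|H|$ (i.e. the number of prime factors of $|H|$ counted with multiplicity). For a set $S$ of non-identity arrows and $N\in\mathbb{N}$, put $S_N=\{(K,H)\in S : P(K)\geqslant N\}$, where $(K,H)$ denotes an arrow with $K\leqslant H$. *)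

From mathcomp Require Import all_boot all_fingroup.
Set Implicit Arguments. Unset Strict Implicit. Unset Printing Implicit Defensive.
Local Open Scope group_scope.

Section TransferSystems.
Variable gT : finGroupType.

(* A pair (H, K) of subgroups of G := [set: gT]; it is an arrow iff H \subset K. *)
Definition arrow := ({group gT} * {group gT})%type.

Definition is_arrow (a : arrow) : bool := a.1 \subset a.2.

Definition transfer_systemb (T : {set arrow}) : bool :=
  [&& [forall a in T, is_arrow a],
      [forall H : {group gT}, (H, H) \in T],
      [forall H : {group gT}, forall K : {group gT}, forall L : {group gT},
          ((H, K) \in T) && ((K, L) \in T) ==> ((H, L) \in T)],
      [forall H : {group gT}, forall K : {group gT}, forall g : gT,
          ((H, K) \in T) ==> (((H :^ g)%G, (K :^ g)%G) \in T)] &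
      [forall H : {group gT}, forall K : {group gT}, forall L : {group gT},
          ((H, K) \in T) && (L \subset K) ==> (((H :&: L)%G, L) \in T)]].

Definition transfer_system (T : {set arrow}) : Prop := transfer_systemb T.

Definition generated (S : {set arrow}) : {set arrow} :=
  [set a | [forall T : {set arrow}, transfer_systemb T && (S \subset T) ==> (a \in T)]].

Definition non_identity_arrows (S : {set arrow}) : bool :=
  [forall a in S, is_arrow a && (a.1 != a.2)].

Definition minimal_generating_set (S T : {set arrow}) : Prop :=
  [/\ non_identity_arrows S, S \subset T, generated S = T &
      forall s, s \in S -> generated (S :\ s) \proper T].

Definition Pfac (H : {group gT}) : nat :=
  \sum_(p <- primes #|H|) logn p #|H|.

Definition level_set (S : {set arrow}) (N : nat) : {set arrow} :=
  [set a in S | N <= Pfac a.1].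

End TransferSystems.

(* The level of an arrow (H, K) is P(H); it is strictly monotone in H, so that an
   arrow of level n produced by composition or restriction only involves arrows of
   level at least n, and at most one of level exactly n besides identities.
   Consequently a generated arrow of level n lies in the transfer system generated by
   the generators of level > n together with a single generator of level n.  For two
   minimal generating sets S and R of T this attaches to each s in S of level n some
   r in R of level n with s in < T_(n+1), r >, and minimality of S shows that the
   generators attached in this way to a given r all coincide.  This gives
   level-preserving injections S -> R and R -> S, hence a level-preserving
   bijection. *)

From mathcomp Require Import all_boot all_fingroup.
Set Implicit Arguments. Unset Strict Implicit. Unset Printing Implicit Defensive.
Local Open Scope group_scope.

Definition bigomega n := \sum_(p <- primes n) logn p n.

Lemma bigomegaE m n : n < m -> bigomega n = \sum_(0 <= p < m) logn p n.
Proof.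
move=> lt_nm; rewrite /bigomega -(filter_pi_of lt_nm) big_filter big_mkcond.
by apply: eq_bigr => p _; case: ifP => // /negbT; rewrite /= -logn_gt0 lt0n negbK => /eqP.
Qed.

Lemma bigomegaM m n : 0 < m -> 0 < n -> bigomega (m * n) = bigomega m + bigomega n.
Proof.
move=> m_gt0 n_gt0; have mn_gt0 : 0 < m * n by rewrite muln_gt0 m_gt0.
rewrite !(@bigomegaE (m * n).+1) ?ltnS ?leq_pmulr ?leq_pmull // -big_split.
by apply: eq_bigr => p _; apply: lognM.
Qed.

Lemma bigomega_gt0 n : 1 < n -> 0 < bigomega n.
Proof.
move=> n_gt1; rewrite /bigomega.
case def_pr: (primes n) => [|p pr].
  by move: (primes_eq0 n); rewrite def_pr ltnNge n_gt1.
by rewrite big_cons ltn_addr // logn_gt0 def_pr mem_head.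
Qed.

Lemma dvdn_leq_bigomega d m : 0 < m -> d %| m -> bigomega d <= bigomega m.
Proof.
move=> m_gt0 /dvdnP[k def_m]; move: m_gt0; rewrite def_m muln_gt0 => /andP[k_gt0 d_gt0].
by rewrite bigomegaM // leq_addl.
Qed.

Lemma dvdn_ltn_bigomega d m : 0 < m -> d %| m -> d < m -> bigomega d < bigomega m.
Proof.
move=> m_gt0 /dvdnP[k def_m]; move: m_gt0; rewrite def_m muln_gt0 => /andP[k_gt0 d_gt0].
rewrite bigomegaM // -{1}[bigomega d]add0n ltn_add2r => lt_dkd.
by apply: bigomega_gt0; rewrite -(ltn_pmul2r d_gt0) mul1n.
Qed.

Section TransferSystems.
Variable gT : finGroupType.
Implicit Types (H K L : {group gT}) (a b : arrow gT) (S T X Z P U D : {set arrow gT}).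

Lemma Pfac_conj H (g : gT) : Pfac (H :^ g)%G = Pfac H.
Proof. by rewrite /Pfac /= cardJg. Qed.

Lemma Pfac_mono H K : H \subset K -> Pfac H <= Pfac K.
Proof. by move=> sHK; apply: dvdn_leq_bigomega (cardSg sHK). Qed.

Lemma Pfac_proper H K : H \proper K -> Pfac H < Pfac K.
Proof.
move=> ltHK; have /andP[sHK _] := ltHK.
by apply: dvdn_ltn_bigomega (cardSg sHK) (proper_card ltHK).
Qed.

Definition all_arrows : {set arrow gT} := [set a | is_arrow a].

Lemma transfer_systemP T :
  reflect [/\ T \subset all_arrows,
              forall H, (H, H) \in T,
              forall H K L, (H, K) \in T -> (K, L) \in T -> (H, L) \in T,
              forall H K g, (H, K) \in T -> ((H :^ g)%G, (K :^ g)%G) \in T &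
              forall H K L, (H, K) \in T -> L \subset K -> ((H :&: L)%G, L) \in T]
          (transfer_systemb T).
Proof.
apply: (iffP and5P) => [[/forall_inP arrT /forallP reflT]|].
  move=> /forallP compT /forallP conjT /forallP restrT.
  split=> [|//|H K L hK kL|H K g hK|H K L hK sLK].
  - by apply/subsetP => a /arrT; rewrite inE.
  - by move/forallP/(_ K)/forallP/(_ L)/implyP: (compT H); rewrite hK kL; apply.
  - by move/forallP/(_ K)/forallP/(_ g)/implyP: (conjT H); apply.
  - by move/forallP/(_ K)/forallP/(_ L)/implyP: (restrT H); rewrite hK sLK; apply.
case=> /subsetP arrT reflT compT conjT restrT; split.
- by apply/forall_inP => a /arrT; rewrite inE.
- exact/forallP.
- do 3!apply/forallP=> ?; apply/implyP => /andP[]; exact: compT.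
- do 3!apply/forallP=> ?; apply/implyP; exact: conjT.
- do 3!apply/forallP=> ?; apply/implyP => /andP[]; exact: restrT.
Qed.

Section TransferSystemTheory.
Variable T : {set arrow gT}.
Hypothesis tsT : transfer_systemb T.

Lemma ts_arrows : T \subset all_arrows.
Proof. by case/transfer_systemP: tsT. Qed.

Lemma ts_refl H : (H, H) \in T.
Proof. by case/transfer_systemP: tsT. Qed.

Lemma ts_comp H K L : (H, K) \in T -> (K, L) \in T -> (H, L) \in T.
Proof. by case/transfer_systemP: tsT => _ _ compT _ _; apply: compT. Qed.

Lemma ts_conj H K g : (H, K) \in T -> ((H :^ g)%G, (K :^ g)%G) \in T.
Proof. by case/transfer_systemP: tsT => _ _ _ conjT _; apply: conjT. Qed.

Lemma ts_restr H K L : (H, K) \in T -> L \subset K -> ((H :&: L)%G, L) \in T.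
Proof. by case/transfer_systemP: tsT => _ _ _ _ restrT; apply: restrT. Qed.

Lemma ts_sub H K : (H, K) \in T -> H \subset K.
Proof. by move/(subsetP ts_arrows); rewrite inE. Qed.

End TransferSystemTheory.

Lemma transfer_system_all_arrows : transfer_systemb all_arrows.
Proof.
apply/transfer_systemP; split=> [//|H|H K L|H K g|H K L _ _]; rewrite !inE /is_arrow //=.
- exact: subset_trans.
- by rewrite conjSg.
- exact: subsetIr.
Qed.

Lemma generatedP S a :
  reflect (forall T, transfer_systemb T -> S \subset T -> a \in T) (a \in generated S).
Proof.
rewrite inE; apply: (iffP forallP) => [genS T tsT sST|genS T].
  by move/implyP: (genS T); apply; rewrite tsT sST.
by apply/implyP => /andP[]; apply: genS.
Qed.

Lemma subset_generated S : S \subset generated S.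
Proof. by apply/subsetP => a Sa; apply/generatedP => T _ /subsetP; apply. Qed.

Lemma generated_min S T : transfer_systemb T -> S \subset T -> generated S \subset T.
Proof. by move=> tsT sST; apply/subsetP => a /generatedP; apply. Qed.

Lemma generated_sub S X : (generated X \subset generated S) = (X \subset generated S).
Proof.
apply/idP/idP => [|sXS]; first exact: subset_trans (subset_generated X).
apply/subsetP => a /generatedP genXa; apply/generatedP => T tsT sST.
by apply: genXa (subset_trans sXS (generated_min tsT sST)).
Qed.

Lemma generatedS S X : X \subset S -> generated X \subset generated S.
Proof. by move=> sXS; rewrite generated_sub (subset_trans sXS) ?subset_generated. Qed.

Lemma generated_arrows S : S \subset all_arrows -> generated S \subset all_arrows.
Proof. exact: generated_min transfer_system_all_arrows. Qed.

Lemma transfer_system_generated S :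
  S \subset all_arrows -> transfer_systemb (generated S).
Proof.
move=> arrS; apply/transfer_systemP; split=> [|H|H K L|H K g|H K L].
- exact: generated_arrows.
- by apply/generatedP => T tsT _; apply: ts_refl.
- move=> /generatedP hK /generatedP kL; apply/generatedP => T tsT sST.
  exact: ts_comp (hK T tsT sST) (kL T tsT sST).
- move=> /generatedP hK; apply/generatedP => T tsT sST.
  exact: ts_conj (hK T tsT sST).
- move=> /generatedP hK sLK; apply/generatedP => T tsT sST.
  exact: ts_restr (hK T tsT sST) sLK.
Qed.

Lemma level_set_sub S N : level_set S N \subset S.
Proof. by apply/subsetP => a; rewrite inE => /andP[]. Qed.

Lemma in_level_layer S n a :
  (a \in level_set S n :\: level_set S n.+1) = (a \in S) && (Pfac a.1 == n).
Proof.
by rewrite !inE eqn_leq ltnNge; case: (a \in S); rewrite //= negbK.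
Qed.

Lemma transfer_system_lowU Z P N :
  transfer_systemb Z -> transfer_systemb P -> P \subset Z ->
  transfer_systemb ([set b in Z | Pfac b.1 < N] :|: P).
Proof.
move=> tsZ tsP sPZ; set W := _ :|: P.
have inW b : (b \in W) = (b \in Z) && (Pfac b.1 < N) || (b \in P) by rewrite !inE.
have WZ b : b \in W -> b \in Z by rewrite inW => /orP[/andP[]|/(subsetP sPZ)].
have highP b : b \in W -> N <= Pfac b.1 -> b \in P.
  by rewrite inW ltnNge => /orP[/andP[_ /negP]|].
apply/transfer_systemP; split=> [|H|H K L hK kL|H K g|H K L hK sLK].
- by apply/subsetP => b /WZ /(subsetP (ts_arrows tsZ)).
- by rewrite inW (ts_refl tsP) orbT.
- have [ltHN|leNH] := ltnP (Pfac H) N.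
    by rewrite inW /= ltHN (ts_comp tsZ (WZ _ hK) (WZ _ kL)).
  have leNK := leq_trans leNH (Pfac_mono (ts_sub tsZ (WZ _ hK))).
  by rewrite inW (ts_comp tsP (highP _ hK leNH) (highP _ kL leNK)) orbT.
- rewrite !inW /= Pfac_conj => /orP[/andP[/(ts_conj tsZ)-> ->] //|].
  by move/(ts_conj tsP)->; rewrite orbT.
- have [ltHLN|leNHL] := ltnP (Pfac (H :&: L)%G) N.
    by rewrite inW /= ltHLN (ts_restr tsZ (WZ _ hK) sLK).
  have leNH := leq_trans leNHL (Pfac_mono (subsetIl H L)).
  by rewrite inW (ts_restr tsP (highP _ hK leNH) sLK) orbT.
Qed.

Lemma level_set_generated X N :
  X \subset all_arrows -> level_set (generated X) N \subset generated (level_set X N).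
Proof.
move=> arrX; set W := [set b in generated X | Pfac b.1 < N] :|: generated (level_set X N).
have tsW : transfer_systemb W.
  apply: transfer_system_lowU; first exact: transfer_system_generated.
    exact: transfer_system_generated (subset_trans (level_set_sub X N) arrX).
  exact: generatedS (level_set_sub X N).
have sXW : X \subset W.
  apply/subsetP => x Xx; rewrite in_setU in_set (subsetP (subset_generated X)) //=.
  by case: ltnP => //= leNx; rewrite (subsetP (subset_generated _)) // inE Xx.
apply/subsetP => a; rewrite in_set => /andP[/(subsetP (generated_min tsW sXW))].
by rewrite in_setU in_set ltnNge => /orP[/andP[_ /negP]|].
Qed.

Lemma transfer_system_level_cover Z n (Ps : {set {set arrow gT}}) P0 :
  transfer_systemb Z -> P0 \in Ps ->
  (forall P, P \in Ps ->
     [/\ transfer_systemb P, P \subset Z & level_set Z n.+1 \subset P]) ->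
  transfer_systemb ([set b in Z | Pfac b.1 != n] :|: \bigcup_(P in Ps) P).
Proof.
move=> tsZ Ps_P0 Ps_ts; set W := _ :|: _.
have inW b : (b \in W) = (b \in Z) && (Pfac b.1 != n) || (b \in \bigcup_(P in Ps) P).
  by rewrite in_setU in_set.
have WZ b : b \in W -> b \in Z.
  rewrite inW => /orP[/andP[]//|/bigcupP[P /Ps_ts[_ sPZ _] /(subsetP sPZ)//]].
have lowW b : b \in Z -> Pfac b.1 != n -> b \in W by rewrite inW => -> ->.
have pieceW P b : P \in Ps -> b \in P -> b \in W.
  by move=> PsP Pb; rewrite inW; apply/orP; right; apply/bigcupP; exists P.
have levelW b : b \in W -> Pfac b.1 = n -> exists2 P, P \in Ps & b \in P.
  by rewrite inW => /orP[/andP[_ /eqP]//|/bigcupP].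
have highP0 b : b \in W -> n < Pfac b.1 -> b \in P0.
  case: (Ps_ts _ Ps_P0) => _ _ /subsetP sZP0 Wb ltnb; apply: sZP0.
  by rewrite in_set (WZ _ Wb).
apply/transfer_systemP; split=> [|H|H K L hK kL|H K g hK|H K L hK sLK].
- by apply/subsetP => b /WZ /(subsetP (ts_arrows tsZ)).
- by case: (Ps_ts _ Ps_P0) => tsP0 _ _; apply: pieceW Ps_P0 (ts_refl tsP0 H).
- have [lvlH|] := eqVneq (Pfac H) n; last first.
    by apply: lowW (ts_comp tsZ (WZ _ hK) (WZ _ kL)).
  have [eqHK|neHK] := eqVneq H K; first by rewrite eqHK.
  have [P PsP hKP] := levelW _ hK lvlH; case: (Ps_ts _ PsP) => tsP _ sZP.
  have ltHK : H \proper K by rewrite properEneq neHK (ts_sub tsZ (WZ _ hK)).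
  apply: pieceW PsP (ts_comp tsP hKP _); apply: (subsetP sZP).
  by rewrite in_set (WZ _ kL) /= -lvlH Pfac_proper.
- have [lvlH|] := eqVneq (Pfac H) n; last first.
    by rewrite -(Pfac_conj H g); apply: lowW (ts_conj tsZ g (WZ _ hK)).
  have [P PsP hKP] := levelW _ hK lvlH; case: (Ps_ts _ PsP) => tsP _ _.
  exact: pieceW PsP (ts_conj tsP g hKP).
- have [lvlHL|] := eqVneq (Pfac (H :&: L)%G) n; last first.
    exact: lowW (ts_restr tsZ (WZ _ hK) sLK).
  have [lvlH|neHn] := eqVneq (Pfac H) n.
    have [P PsP hKP] := levelW _ hK lvlH; case: (Ps_ts _ PsP) => tsP _ _.
    exact: pieceW PsP (ts_restr tsP hKP sLK).
  have ltnH : n < Pfac H by rewrite ltn_neqAle eq_sym neHn -lvlHL Pfac_mono ?subsetIl.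
  case: (Ps_ts _ Ps_P0) => tsP0 _ _.
  exact: pieceW Ps_P0 (ts_restr tsP0 (highP0 _ hK ltnH) sLK).
Qed.

Lemma generated_one_level U D n a :
  U \subset all_arrows -> D \subset all_arrows ->
  (forall u, u \in U -> n < Pfac u.1) -> (forall d, d \in D -> Pfac d.1 = n) ->
  a \in generated (U :|: D) -> Pfac a.1 = n ->
  a \in generated U \/ exists2 d, d \in D & a \in generated (U :|: [set d]).
Proof.
move=> arrU arrD ltnU eqnD UDa lvla.
set Z := generated (U :|: D).
set Ps := generated U |: [set generated (U :|: [set d]) | d in D].
set W := [set b in Z | Pfac b.1 != n] :|: \bigcup_(P in Ps) P.
have arrUd d : d \in D -> U :|: [set d] \subset all_arrows.
  by move=> Dd; rewrite subUset arrU sub1set (subsetP arrD).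
have sZU : level_set Z n.+1 \subset generated U.
  apply: subset_trans (level_set_generated _ _) (generatedS _); first by rewrite subUset arrU.
  apply/subsetP => b; rewrite in_set in_setU => /andP[/orP[//|/eqnD ->]].
  by rewrite ltnn.
have tsW : transfer_systemb W.
  apply: transfer_system_level_cover (setU11 _ _) _.
    by apply: transfer_system_generated; rewrite subUset arrU.
  move=> P /setU1P[->|/imsetP[d Dd ->]]; split=> //.
  - exact: transfer_system_generated.
  - exact: generatedS (subsetUl _ _).
  - exact: transfer_system_generated (arrUd d Dd).
  - by apply: generatedS; rewrite setUS ?sub1set.
  - exact: subset_trans sZU (generatedS (subsetUl _ _)).
have sUDW : U :|: D \subset W.
  apply/subsetP => b /setUP[Ub|Db]; rewrite in_setU; apply/orP; right; apply/bigcupP.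
  - by exists (generated U); rewrite ?setU11 ?(subsetP (subset_generated U)).
  - exists (generated (U :|: [set b])); first exact/setU1r/imset_f.
    by rewrite (subsetP (subset_generated _)) // !inE eqxx orbT.
move: (subsetP (generated_min tsW sUDW) a UDa).
rewrite in_setU in_set lvla eqxx andbF /= => /bigcupP[P].
by case/setU1P=> [->|/imsetP[d Dd ->]]; [left | right; exists d].
Qed.

End TransferSystems.

Arguments all_arrows {gT}.

Section MinimalGeneratingSets.
Variable gT : finGroupType.
Implicit Types (T X Y : {set arrow gT}) (x y : arrow gT).

Definition level_partner T x y :=
  (Pfac y.1 == Pfac x.1) && (x \in generated (level_set T (Pfac x.1).+1 :|: [set y])).

Section OneMinimalGeneratingSet.
Variables T X : {set arrow gT}.
Hypothesis mX : minimal_generating_set X T.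

Lemma mingen_arrows : X \subset all_arrows.
Proof.
case: mX => /forall_inP arrX _ _ _.
by apply/subsetP => a /arrX /andP[arr_a _]; rewrite inE.
Qed.

Lemma mingen_target_arrows : T \subset all_arrows.
Proof. by case: mX => _ _ <- _; apply: generated_arrows mingen_arrows. Qed.

Lemma mingen_notin_generated x (E : {set arrow gT}) :
  x \in X -> E \subset level_set T (Pfac x.1).+1 :|: (X :\ x) -> x \notin generated E.
Proof.
move=> Xx sE; case: mX => _ _ genX minX.
have sEX : generated E \subset generated (X :\ x).
  rewrite generated_sub; apply: subset_trans sE _; rewrite subUset subset_generated andbT.
  rewrite -genX; apply: subset_trans (level_set_generated _ mingen_arrows) (generatedS _).
  apply/subsetP => y; rewrite !inE => /andP[Xy ltxy]; rewrite Xy andbT.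
  by apply: contraTneq ltxy => ->; rewrite ltnn.
apply/negP => /(subsetP sEX) genXx.
have sXgen : X \subset generated (X :\ x).
  apply/subsetP => y Xy; have [-> //|neyx] := eqVneq y x.
  by rewrite (subsetP (subset_generated _)) // !inE neyx.
by move: (minX x Xx); rewrite properE -genX (generated_sub (X :\ x)) sXgen andbF.
Qed.

Lemma mingen_exchange x y :
  x \in X -> y \in X -> x \in generated (level_set T (Pfac x.1).+1 :|: [set y]) -> y = x.
Proof.
move=> Xx Xy; apply: contraTeq => neyx; apply: mingen_notin_generated => //.
by rewrite setUS // sub1set !inE neyx.
Qed.

End OneMinimalGeneratingSet.

Lemma mingen_partner T X Y x :
  minimal_generating_set X T -> minimal_generating_set Y T -> x \in X ->
  exists2 y, y \in Y & level_partner T x y.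
Proof.
move=> mX mY Xx; set n := Pfac x.1; set U := level_set T n.+1.
set D := [set y in Y | Pfac y.1 == n].
have sDY : D \subset Y by apply/subsetP => y; rewrite inE => /andP[].
have UDx : x \in generated (U :|: D).
  case: (mX) (mY) => _ sXT _ _ [_ sYT genY _].
  have: x \in level_set (generated Y) n by rewrite in_set genY (subsetP sXT) /=.
  move/(subsetP (level_set_generated n (mingen_arrows mY))); apply/subsetP/generatedS.
  apply/subsetP => y; rewrite !inE => /andP[Yy]; rewrite leq_eqVlt => /orP[/eqP<-|ltny].
    by rewrite Yy eqxx orbT.
  by rewrite (subsetP sYT) // ltny.
have arrU : U \subset all_arrows.
  exact: subset_trans (level_set_sub T _) (mingen_target_arrows mY).
have ltnU u : u \in U -> n < Pfac u.1 by rewrite inE => /andP[].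
have eqnD d : d \in D -> Pfac d.1 = n by rewrite inE => /andP[_ /eqP].
have [Ux|[y Dy xy]] :=
  generated_one_level arrU (subset_trans sDY (mingen_arrows mY)) ltnU eqnD UDx (erefl n).
  by move: (mingen_notin_generated mX Xx (subsetUl U (X :\ x))); rewrite Ux.
by move: Dy; rewrite inE => /andP[Yy lvly]; exists y; rewrite /level_partner ?lvly.
Qed.

Lemma mingen_level_injection T X Y :
  minimal_generating_set X T -> minimal_generating_set Y T ->
  exists f : arrow gT -> arrow gT,
    [/\ {in X &, injective f}, f @: X \subset Y & {in X, forall x, Pfac (f x).1 = Pfac x.1}].
Proof.
move=> mX mY; pose f x := odflt x [pick y in Y | level_partner T x y].
have fP x : x \in X -> (f x \in Y) && level_partner T x (f x).
  rewrite /f => Xx; case: pickP => [y //|noy].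
  by have [y Yy pxy] := mingen_partner mX mY Xx; move: (noy y); rewrite /= Yy pxy.
exists f; split; first move=> x1 x2 Xx1 Xx2 eqf.
- case/andP: (fP _ Xx1) => Yy px1; have /andP[_ px2] := fP _ Xx2; rewrite -eqf in px2.
  have [z Xz /andP[_ genz]] := mingen_partner mY mX Yy.
  have partner_eq x : x \in X -> level_partner T x (f x1) -> z = x.
    move=> Xx /andP[/eqP lvlx genx]; apply: (mingen_exchange mX Xx Xz).
    apply: (subsetP _ _ genx); rewrite generated_sub subUset sub1set -lvlx genz andbT.
    exact: subset_trans (subsetUl _ _) (subset_generated _).
  by rewrite -(partner_eq x1 Xx1 px1) (partner_eq x2 Xx2 px2).
- by apply/subsetP => _ /imsetP[x Xx ->]; case/andP: (fP _ Xx).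
- by move=> x Xx; case/andP: (fP _ Xx) => _ /andP[/eqP].
Qed.

End MinimalGeneratingSets.

Theorem proposition2p13 (gT : finGroupType) (T S R : {set arrow gT}) :
  transfer_system T ->
  minimal_generating_set S T ->
  minimal_generating_set R T ->
  exists f : arrow gT -> arrow gT,
    [/\ {in S &, injective f}, f @: S = R &
        forall (n : nat) (s : arrow gT),
          s \in level_set S n :\: level_set S n.+1 ->
          f s \in level_set R n :\: level_set R n.+1].
Proof.
(* T = <S> is a transfer system in any case. *)
move=> _ mS mR.
have [f [f_inj fSR f_lvl]] := mingen_level_injection mS mR.
have [g [g_inj gRS _]] := mingen_level_injection mR mS.
have fS : f @: S = R.
  apply/eqP; rewrite eqEcard fSR card_in_imset // -(card_in_imset g_inj).
  exact: subset_leq_card.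
exists f; split=> // n s; rewrite !in_level_layer => /andP[Ss /eqP <-].
by rewrite -fS imset_f // f_lvl ?eqxx.
Qed.
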